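(* For every integer $k\ge 0$, $$\sum_{n\ge k}B(n,k)\frac{x^n}{n!}=\tan^k x\,\sec x$$ as formal power series (equivalently, as analytic functions near $0$).
   Context: A labeled ballot path is a lattice path from $(0,0)$ with steps $u=(1,1)$, $d=(1,-1)$ never going below the $x$-axis, each step carrying an integer label between $0$ and its height, where the height of a step is the smaller $y$-coordinate of its endpoints. $B(n,k)$ is the number of labeled ballot paths from $(0,0)$ ending at $(n,k)$. *)

From mathcomp Require Import all_boot.
Set Implicit Arguments. Unset Strict Implicit. Unset Printing Implicit Defensive.

(* A labeled step: (true, l) is an up step u=(1,1), (false, l) is a down step
   d=(1,-1); l is its integer label. *)

Fixpoint lbp_valid (h : nat) (s : seq (bool * nat)) : bool :=
  match s with
  | [::] => true
  | (true, l) :: s' => (l <= h) && lbp_valid h.+1 s'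
  | (false, l) :: s' => (0 < h) && (l <= h.-1) && lbp_valid h.-1 s'
  end.

Fixpoint lbp_end (h : nat) (s : seq (bool * nat)) : nat :=
  match s with
  | [::] => h
  | (true, _) :: s' => lbp_end h.+1 s'
  | (false, _) :: s' => lbp_end h.-1 s'
  end.

(* A labeled path with n steps, labels stored in 'I_n.+1 (any valid label is
   at most the height, which is < n, so no valid path is lost). *)
Definition lbp_seq n (t : n.-tuple (bool * 'I_n.+1)) : seq (bool * nat) :=
  [seq (p.1, nat_of_ord p.2) | p <- t].

Definition B (n k : nat) : nat :=
  #|[set t : n.-tuple (bool * 'I_n.+1) |
       lbp_valid 0 (lbp_seq t) && (lbp_end 0 (lbp_seq t) == k)]|.

(* Splitting off the last step of a labeled ballot path gives
   B(n+1,k) = k B(n,k-1) + (k+1) B(n,k+1), i.e. the exponential generating functions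
   f_k satisfy f_k' = k f_(k-1) + (k+1) f_(k+1).  Put D_k = cos f_k - sin f_(k-1), with
   sin f_(-1) read as 1.  Then D_k' = (k+1) D_(k+1) + (k-1) D_(k-1) and D_k(0) = 0, so by
   induction on the degree every Taylor coefficient of every D_k vanishes: cos f_0 = 1
   and cos f_(k+1) = sin f_k, whence f_k = tan^k sec.  Since B(n,k) <= 2^n n!, all the
   series involved converge absolutely for |x| < 1/2, where the coefficient identities
   become identities of functions. *)

From mathcomp Require all_boot zify.
From Stdlib Require Factorial.

Module LabeledBallotPaths.
Import all_boot zify Factorial.

Fixpoint lbp_count (n h k : nat) : nat :=
  if n is n'.+1 then h.+1 * lbp_count n' h.+1 k + h * lbp_count n' h.-1 k
  else h == k.

Lemma lbp_countS n h k :
  lbp_count n.+1 h k = h.+1 * lbp_count n h.+1 k + h * lbp_count n h.-1 k.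
Proof. by []. Qed.

Lemma lbp_count_last n h k :
  lbp_count n.+1 h k = k * lbp_count n h k.-1 + k.+1 * lbp_count n h k.+1.
Proof.
elim: n h k => [|n IH] h k; first by rewrite /=; do 4 case: eqP => /= ?; lia.
by rewrite lbp_countS (IH h.+1) (IH h.-1) !lbp_countS; lia.
Qed.

Lemma lbp_count_eq0 n h k : h + n < k -> lbp_count n h k = 0.
Proof.
elim: n h => [|n IH] h hnk; first by apply/eqP; rewrite eqb0 neq_ltn -[h]addn0 hnk.
by rewrite lbp_countS !IH ?muln0 //; lia.
Qed.

Definition lbp_ok (h k : nat) (s : seq (bool * nat)) : bool :=
  lbp_valid h s && (lbp_end h s == k).

Lemma lbp_ok_up h k l s : lbp_ok h k ((true, l) :: s) = (l < h.+1) && lbp_ok h.+1 k s.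
Proof. by rewrite /lbp_ok /= andbA. Qed.

Lemma lbp_ok_down h k l s : lbp_ok h k ((false, l) :: s) = (l < h) && lbp_ok h.-1 k s.
Proof. by case: h => [|h]; rewrite /lbp_ok //= andbA. Qed.

Lemma sum_tupleS (T : finType) n (F : n.+1.-tuple T -> nat) :
  \sum_(t : n.+1.-tuple T) F t = \sum_(x : T) \sum_(t : n.-tuple T) F [tuple of x :: t].
Proof.
rewrite pair_big /= (reindex (fun p : T * n.-tuple T => [tuple of p.1 :: p.2])) //=.
exists (fun t : n.+1.-tuple T => (thead t, behead_tuple t)).
  by move=> [x t] _ /=; congr (_, _); apply: val_inj.
by move=> t _; rewrite [RHS]tuple_eta.
Qed.

Lemma sum_ord_ltn m h : \sum_(l < m) (l < h : nat) = minn m h.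
Proof.
elim: m => [|m IH]; first by rewrite big_ord0 min0n.
by rewrite big_ord_recr /= IH; case: ltnP; lia.
Qed.

(* Labels range over ['I_m]; as long as [h + n <= m] no label of a valid path is cut off. *)
Lemma sum_lbp_ok m n h k : h + n <= m ->
  \sum_(t : n.-tuple (bool * 'I_m)) lbp_ok h k [seq (p.1, val p.2) | p <- t] = lbp_count n h k.
Proof.
elim: n h => [|n IH] h hnm.
  rewrite (eq_bigr (fun=> (h == k : nat))) => [|t _]; last by rewrite [t]tuple0.
  by rewrite sum_nat_const card_tuple expn0 mul1n.
have sum_first (b : bool) a h' :
    (forall l s, lbp_ok h k ((b, l) :: s) = (l < a) && lbp_ok h' k s) -> h' + n <= m ->
    \sum_(l < m) \sum_(t : n.-tuple (bool * 'I_m))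
      lbp_ok h k [seq (p.1, val p.2) | p <- (b, l) :: t] = minn m a * lbp_count n h' k.
  move=> okE h'nm; rewrite -sum_ord_ltn big_distrl; apply: eq_bigr => l _.
  by rewrite -IH // big_distrr; apply: eq_bigr => t _ /=; rewrite okE mulnb.
rewrite sum_tupleS -(pair_big xpredT xpredT (fun b (l : 'I_m) =>
  \sum_(t : n.-tuple _) lbp_ok h k [seq (p.1, val p.2) | p <- (b, l) :: t])) big_bool /=.
rewrite (sum_first true h.+1 h.+1 (@lbp_ok_up h k)) ?lbp_countS; last by lia.
rewrite (sum_first false h h.-1 (@lbp_ok_down h k)); lia.
Qed.

Lemma B_lbp_count n k : B n k = lbp_count n 0 k.
Proof.
rewrite -(@sum_lbp_ok n.+1) // /B -sum1dep_card big_mkcond /=.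
by apply: eq_bigr => t _; rewrite /lbp_ok /lbp_seq; case: ifP.
Qed.

Lemma B_0 k : B 0 k = (k == 0).
Proof. by rewrite B_lbp_count /= eq_sym. Qed.

(* [B_S] and [B_le] use Peano's operations, as they feed [plus_INR], [mult_INR] and [pow_INR]. *)
Lemma B_S n k : B n.+1 k = (k * B n k.-1 + k.+1 * B n k.+1)%coq_nat.
Proof. by rewrite !B_lbp_count lbp_count_last. Qed.

Lemma B_eq0 n k : n < k -> B n k = 0.
Proof. by move=> nk; rewrite B_lbp_count lbp_count_eq0. Qed.

Lemma B_le n k : (B n k <= Nat.pow 2 n * fact n)%coq_nat.
Proof.
elim: n k => [|n IH] k; first by rewrite B_0; case: k => [|k] /=; lia.
have [kn|nk] := leqP k n.+1; last by rewrite B_eq0 //; lia.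
have down_le : k.+1 * B n k.+1 <= n.+1 * (Nat.pow 2 n * fact n)%coq_nat.
  have [kn'|nk'] := leqP k.+1 n; last by rewrite B_eq0 // muln0.
  by apply: leq_mul; [lia | apply/leP].
have up_le := IH k.-1.
by rewrite B_S /=; nia.
Qed.

End LabeledBallotPaths.
Import LabeledBallotPaths.

From Stdlib Require Import Reals Arith Factorial Lra Lia.
From Coquelicot Require Import Coquelicot.
Open Scope R_scope.

Definition egf_term (a : nat -> R) (x : R) (n : nat) : R := a n * x ^ n / INR (fact n).

Definition egf_prod_coef (a c : nat -> R) (n : nat) : R :=
  sum_f_R0 (fun p => a p / INR (fact p) * (c (n - p)%nat / INR (fact (n - p)))) n.

(* The product rule (f g)' = f' g + f g', read off at the coefficient of [x ^ n]. *)
Lemma egf_prod_coef_S a c n :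
  INR (S n) * egf_prod_coef a c (S n) =
  egf_prod_coef (fun p => a (S p)) c n + egf_prod_coef a (fun p => c (S p)) n.
Proof.
unfold egf_prod_coef.
set (t := fun p => a p / INR (fact p) * (c (S n - p)%nat / INR (fact (S n - p)))).
(* split the weight [S n] of the [p]-th term as [p + (S n - p)] *)
rewrite scal_sum, (sum_eq _ (fun p => t p * INR p + t p * INR (S n - p))).
2:{ intros p Hp. rewrite <- Rmult_plus_distr_l, <- plus_INR.
    unfold t. do 2 f_equal. lia. }
rewrite sum_plus. f_equal.
- rewrite decomp_sum by lia. simpl pred. simpl (INR 0). rewrite Rmult_0_r, Rplus_0_l.
  apply sum_eq. intros p Hp. unfold t.
  replace (S n - S p)%nat with (n - p)%nat by lia.
  change (fact (S p)) with (S p * fact p)%nat. rewrite mult_INR.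
  field; repeat split; first [apply INR_fact_neq_0 | apply not_0_INR; lia].
- rewrite tech5. unfold t at 2. rewrite Nat.sub_diag. simpl (INR 0). rewrite Rmult_0_r, Rplus_0_r.
  apply sum_eq. intros p Hp. unfold t.
  replace (S n - p)%nat with (S (n - p)) by lia.
  change (fact (S (n - p))) with (S (n - p) * fact (n - p))%nat. rewrite mult_INR.
  field; repeat split; first [apply INR_fact_neq_0 | apply not_0_INR; lia].
Qed.

Lemma egf_prod_coef_ext a a' c c' n :
  (forall p, a p = a' p) -> (forall p, c p = c' p) ->
  egf_prod_coef a c n = egf_prod_coef a' c' n.
Proof. intros Ha Hc. apply sum_eq. intros p _. now rewrite Ha, Hc. Qed.

Lemma egf_prod_coef_opp_l a c n :
  egf_prod_coef (fun p => - a p) c n = - egf_prod_coef a c n.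
Proof.
transitivity (-1 * egf_prod_coef a c n); [|ring].
unfold egf_prod_coef. rewrite scal_sum.
apply sum_eq. intros p _. unfold Rdiv. ring.
Qed.

Lemma egf_prod_coef_linear_r a c d u v n :
  egf_prod_coef a (fun p => u * c p + v * d p) n =
  u * egf_prod_coef a c n + v * egf_prod_coef a d n.
Proof.
unfold egf_prod_coef. rewrite !scal_sum, <- sum_plus.
apply sum_eq. intros p _. unfold Rdiv. ring.
Qed.

Fixpoint cos_coef (n : nat) : R :=
  match n with
  | 0 => 1
  | 1 => 0
  | S (S m) => - cos_coef m
  end.

Lemma cos_coef_SS n : cos_coef (S (S n)) = - cos_coef n.
Proof. reflexivity. Qed.

Definition sin_coef (n : nat) : R := - cos_coef (S n).

Lemma cos_coef_S n : cos_coef (S n) = - sin_coef n.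
Proof. unfold sin_coef. ring. Qed.

Lemma sin_coef_S n : sin_coef (S n) = cos_coef n.
Proof. unfold sin_coef. rewrite cos_coef_SS. ring. Qed.

Lemma cos_coef_even n : cos_coef (2 * n) = (-1) ^ n.
Proof.
induction n as [|n IH]; [reflexivity|].
replace (2 * S n)%nat with (S (S (2 * n))) by lia. rewrite cos_coef_SS, IH. simpl. ring.
Qed.

Lemma cos_coef_odd n : cos_coef (2 * n + 1) = 0.
Proof.
induction n as [|n IH]; [reflexivity|].
replace (2 * S n + 1)%nat with (S (S (2 * n + 1))) by lia. rewrite cos_coef_SS, IH. ring.
Qed.

Definition ballot (k n : nat) : R := INR (B n k).

Lemma ballot_S k n :
  ballot k (S n) = INR k * ballot (pred k) n + INR (S k) * ballot (S k) n.
Proof. unfold ballot. now rewrite B_S, plus_INR, !mult_INR. Qed.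

Lemma egf_prod_coef_ballot_S a k n :
  INR (S n) * egf_prod_coef a (ballot k) (S n) =
  egf_prod_coef (fun p => a (S p)) (ballot k) n
  + INR k * egf_prod_coef a (ballot (pred k)) n
  + INR (S k) * egf_prod_coef a (ballot (S k)) n.
Proof.
rewrite egf_prod_coef_S, Rplus_assoc, <- egf_prod_coef_linear_r.
f_equal. apply egf_prod_coef_ext; intros p; [reflexivity | apply ballot_S].
Qed.

Lemma cos_ballot_coef_S k n :
  INR (S n) * egf_prod_coef cos_coef (ballot k) (S n) =
  - egf_prod_coef sin_coef (ballot k) n
  + INR k * egf_prod_coef cos_coef (ballot (pred k)) n
  + INR (S k) * egf_prod_coef cos_coef (ballot (S k)) n.
Proof.
rewrite egf_prod_coef_ballot_S, <- egf_prod_coef_opp_l.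
do 2 f_equal. apply egf_prod_coef_ext; [apply cos_coef_S | reflexivity].
Qed.

Lemma sin_ballot_coef_S k n :
  INR (S n) * egf_prod_coef sin_coef (ballot k) (S n) =
  egf_prod_coef cos_coef (ballot k) n
  + INR k * egf_prod_coef sin_coef (ballot (pred k)) n
  + INR (S k) * egf_prod_coef sin_coef (ballot (S k)) n.
Proof.
rewrite egf_prod_coef_ballot_S.
do 2 f_equal. apply egf_prod_coef_ext; [apply sin_coef_S | reflexivity].
Qed.

(* The [n]-th Taylor coefficient of [cos f_k - sin f_(k-1)], where [f_k] is the
   exponential generating function of [B(., k)] and [sin f_(-1)] is read as [1]. *)
Definition tan_sec_defect (k n : nat) : R :=
  egf_prod_coef cos_coef (ballot k) n -
  match k with
  | 0 => match n with 0 => 1 | S _ => 0 end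
  | S j => egf_prod_coef sin_coef (ballot j) n
  end.

Lemma tan_sec_defect_0 k : tan_sec_defect k 0 = 0.
Proof.
unfold tan_sec_defect, egf_prod_coef, ballot. simpl.
destruct k as [|k]; rewrite B_0; unfold sin_coef; simpl; field.
Qed.

Lemma tan_sec_defect_S k n :
  INR (S n) * tan_sec_defect k (S n) =
  INR (S k) * tan_sec_defect (S k) n + INR (pred k) * tan_sec_defect (pred k) n.
Proof.
unfold tan_sec_defect at 1. rewrite Rmult_minus_distr_l, cos_ballot_coef_S.
destruct k as [|j].
- unfold tan_sec_defect. simpl. ring.
- rewrite sin_ballot_coef_S. unfold tan_sec_defect.
  destruct j as [|i]; simpl pred; cbv beta iota; rewrite ?S_INR; simpl INR; ring.
Qed.

Lemma tan_sec_defect_eq0 k n : tan_sec_defect k n = 0.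
Proof.
revert k. induction n as [|n IH]; intros k; [apply tan_sec_defect_0|].
apply (Rmult_eq_reg_l (INR (S n))); [|apply not_0_INR; lia].
rewrite tan_sec_defect_S, !IH. ring.
Qed.

Lemma cos_ballot_0 n :
  egf_prod_coef cos_coef (ballot 0) n = match n with 0 => 1 | S _ => 0 end.
Proof. pose proof (tan_sec_defect_eq0 0 n) as H. unfold tan_sec_defect in H. lra. Qed.

Lemma cos_ballot_S k n :
  egf_prod_coef cos_coef (ballot (S k)) n = egf_prod_coef sin_coef (ballot k) n.
Proof. pose proof (tan_sec_defect_eq0 (S k) n) as H. unfold tan_sec_defect in H. lra. Qed.

Lemma is_series_0 : is_series (fun _ : nat => 0) 0.
Proof.
apply is_series_Reals. intros eps Heps. exists 0%nat. intros n _.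
rewrite sum_cte, Rmult_0_l, R_dist_eq. exact Heps.
Qed.

Lemma is_series_unit x :
  is_series (fun n => match n with 0 => 1 | S _ => 0 end * x ^ n) 1.
Proof.
apply is_series_Reals. intros eps Heps. exists 0%nat. intros n _.
replace (sum_f_R0 _ n) with 1; [now rewrite R_dist_eq|].
induction n as [|n IH]; simpl; [ring | rewrite <- IH; ring].
Qed.

Lemma is_series_cos x : is_series (egf_term cos_coef x) (cos x).
Proof.
apply (is_series_ext (fun n => cos_coef n / INR (fact n) * x ^ n)).
{ intros n. simpl. unfold egf_term, Rdiv. ring. }
apply is_pseries_R. unfold cos. destruct (exist_cos (Rsqr x)) as [l Hl].
rewrite Rsqr_pow2 in Hl. rewrite <- (Rplus_0_r l), <- (Rmult_0_r x).
apply is_pseries_odd_even; apply is_pseries_R.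
- apply (is_series_ext (fun k => cos_n k * (x ^ 2) ^ k)); [|now apply is_series_Reals].
  intros k. unfold cos_n. now rewrite cos_coef_even.
- apply (is_series_ext (fun _ => 0)); [|apply is_series_0].
  intros k. rewrite cos_coef_odd. simpl. unfold Rdiv. ring.
Qed.

Lemma is_series_sin x : is_series (egf_term sin_coef x) (sin x).
Proof.
apply (is_series_ext (fun n => sin_coef n / INR (fact n) * x ^ n)).
{ intros n. simpl. unfold egf_term, Rdiv. ring. }
apply is_pseries_R. unfold sin. destruct (exist_sin (Rsqr x)) as [l Hl].
rewrite Rsqr_pow2 in Hl. rewrite <- (Rplus_0_l (x * l)).
apply is_pseries_odd_even; apply is_pseries_R.
- apply (is_series_ext (fun _ => 0)); [|apply is_series_0].
  intros k. unfold sin_coef. replace (S (2 * k)) with (2 * k + 1)%nat by lia.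
  rewrite cos_coef_odd. simpl. unfold Rdiv. ring.
- apply (is_series_ext (fun k => sin_n k * (x ^ 2) ^ k)); [|now apply is_series_Reals].
  intros k. unfold sin_n, sin_coef. replace (S (2 * k + 1)) with (S (S (2 * k))) by lia.
  now rewrite cos_coef_SS, Ropp_involutive, cos_coef_even.
Qed.

Lemma egf_term_abs_le a x q n :
  0 <= q -> Rabs (a n) <= q ^ n * INR (fact n) -> Rabs (egf_term a x n) <= (q * Rabs x) ^ n.
Proof.
intros Hq Ha. pose proof (INR_fact_lt_0 n) as Hf.
unfold egf_term, Rdiv. rewrite !Rabs_mult, <- RPow_abs, Rpow_mult_distr.
rewrite (Rabs_pos_eq (/ _)) by (left; apply Rinv_0_lt_compat, Hf).
apply (Rmult_le_reg_r (INR (fact n))); [exact Hf|].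
replace (Rabs (a n) * Rabs x ^ n * / INR (fact n) * INR (fact n))
  with (Rabs (a n) * Rabs x ^ n) by (field; lra).
apply Rle_trans with (q ^ n * INR (fact n) * Rabs x ^ n); [|right; ring].
apply Rmult_le_compat_r; [apply pow_le, Rabs_pos | exact Ha].
Qed.

Lemma ex_series_abs_egf a x q :
  0 <= q -> q * Rabs x < 1 -> (forall n, Rabs (a n) <= q ^ n * INR (fact n)) ->
  ex_series (fun n => Rabs (egf_term a x n)).
Proof.
intros Hq Hqx Ha.
apply (@ex_series_le R_AbsRing R_CompleteNormedModule _ (fun n => (q * Rabs x) ^ n)).
- intros n. change (Rabs (Rabs (egf_term a x n)) <= (q * Rabs x) ^ n).
  rewrite Rabs_Rabsolu. now apply egf_term_abs_le.
- apply ex_series_geom. rewrite Rabs_pos_eq; [exact Hqx|].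
  apply Rmult_le_pos; [exact Hq | apply Rabs_pos].
Qed.

Lemma is_series_egf_prod a c x la lc :
  is_series (egf_term a x) la -> is_series (egf_term c x) lc ->
  ex_series (fun n => Rabs (egf_term a x n)) -> ex_series (fun n => Rabs (egf_term c x n)) ->
  is_series (fun n => egf_prod_coef a c n * x ^ n) (la * lc).
Proof.
intros Ha Hc Ha' Hc'. eapply is_series_ext; [|exact (is_series_mult _ _ _ _ Ha Hc Ha' Hc')].
intros n. simpl. unfold egf_prod_coef. rewrite Rmult_comm, scal_sum.
apply sum_eq. intros p Hp. unfold egf_term.
replace (x ^ n) with (x ^ p * x ^ (n - p)) by (rewrite <- pow_add; f_equal; lia).
unfold Rdiv. ring.
Qed.

Lemma trig_coef_abs_le n : Rabs (cos_coef n) <= 1 /\ Rabs (sin_coef n) <= 1.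
Proof.
unfold sin_coef. rewrite Rabs_Ropp. induction n as [|n [IH1 IH2]].
- simpl. rewrite Rabs_R1, Rabs_R0. lra.
- split; [exact IH2|]. now rewrite cos_coef_SS, Rabs_Ropp.
Qed.

Lemma INR_fact_ge_1 n : 1 <= INR (fact n).
Proof. apply (le_INR 1). pose proof (lt_O_fact n). lia. Qed.

Lemma ex_series_abs_egf_bounded a x :
  Rabs x < 1 -> (forall n, Rabs (a n) <= 1) -> ex_series (fun n => Rabs (egf_term a x n)).
Proof.
intros Hx Ha. apply (ex_series_abs_egf _ _ 1); [lra | lra |].
intros n. rewrite pow1, Rmult_1_l. apply Rle_trans with 1; [apply Ha | apply INR_fact_ge_1].
Qed.

Lemma ballot_bound k n : Rabs (ballot k n) <= 2 ^ n * INR (fact n).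
Proof.
unfold ballot. rewrite Rabs_pos_eq by apply pos_INR.
replace 2 with (INR 2) by reflexivity. rewrite <- pow_INR, <- mult_INR.
apply le_INR, B_le.
Qed.

Section BallotEgfSeries.

Variable x : R.
Hypothesis small_x : Rabs x < / 2.

Let abs_cos : ex_series (fun n => Rabs (egf_term cos_coef x n)).
Proof. apply ex_series_abs_egf_bounded; [lra | apply trig_coef_abs_le]. Qed.

Let abs_sin : ex_series (fun n => Rabs (egf_term sin_coef x n)).
Proof. apply ex_series_abs_egf_bounded; [lra | apply trig_coef_abs_le]. Qed.

Let abs_ballot k : ex_series (fun n => Rabs (egf_term (ballot k) x n)).
Proof. apply (ex_series_abs_egf _ _ 2); [lra | lra | apply ballot_bound]. Qed.

Lemma is_series_ballot_Series k :
  is_series (egf_term (ballot k) x) (Series (egf_term (ballot k) x)).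
Proof. apply Series_correct, ex_series_Rabs, abs_ballot. Qed.

Lemma cos_mul_ballot_egf_0 : cos x * Series (egf_term (ballot 0) x) = 1.
Proof.
rewrite <- (is_series_unique _ _ (is_series_egf_prod _ _ _ _ _
  (is_series_cos x) (is_series_ballot_Series 0) abs_cos (abs_ballot 0))).
apply is_series_unique. eapply is_series_ext; [|apply is_series_unit].
intros n. simpl. now rewrite cos_ballot_0.
Qed.

Lemma cos_mul_ballot_egf_S k :
  cos x * Series (egf_term (ballot (S k)) x) = sin x * Series (egf_term (ballot k) x).
Proof.
rewrite <- (is_series_unique _ _ (is_series_egf_prod _ _ _ _ _
  (is_series_cos x) (is_series_ballot_Series (S k)) abs_cos (abs_ballot (S k)))).
apply is_series_unique. eapply is_series_ext; [|exact (is_series_egf_prod _ _ _ _ _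
  (is_series_sin x) (is_series_ballot_Series k) abs_sin (abs_ballot k))].
intros n. simpl. now rewrite cos_ballot_S.
Qed.

Lemma Series_ballot_egf k : Series (egf_term (ballot k) x) = tan x ^ k / cos x.
Proof.
assert (cos_x : cos x <> 0).
{ pose proof PI2_1. apply Rabs_def2 in small_x. apply Rgt_not_eq, cos_gt_0; lra. }
apply (Rmult_eq_reg_l (cos x)); [|exact cos_x].
induction k as [|k IH].
- rewrite cos_mul_ballot_egf_0. simpl. field. exact cos_x.
- rewrite cos_mul_ballot_egf_S.
  replace (Series (egf_term (ballot k) x)) with (tan x ^ k / cos x).
  + unfold tan. simpl. field. exact cos_x.
  + apply (Rmult_eq_reg_l (cos x)); [now rewrite IH | exact cos_x].
Qed.

End BallotEgfSeries.

Theorem mainTheorem5 (k : nat) :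
  exists r : R, 0 < r /\
    forall x : R, Rabs x < r ->
      infinite_sum (fun n : nat => INR (B n k) * x ^ n / INR (fact n))
                   (tan x ^ k * / cos x).
Proof.
exists (/ 2). split; [lra|].
intros x small_x. apply is_series_Reals.
replace (tan x ^ k * / cos x) with (Series (egf_term (ballot k) x))
  by apply Series_ballot_egf, small_x.
apply is_series_ballot_Series, small_x.
Qed.
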